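(* Let $G$ and $H$ be finite graphs such that $G$ does not contain $H$ as a minor, let $k\ge 1$ be an integer, and let $J$ be the $k$-subdivision of $H$. If $f$ is an embedding of the shortest-path metric of $J$ into the shortest-path metric of $G$, then the distortion of $f$ is at least $k/6-1/2$.
   Context: All graphs carry their shortest-path metric with every edge of length $1$. The $k$-subdivision of a graph $H$ is the graph obtained by replacing each edge of $H$ by a path of length $k$. For metric spaces $(X,\nu)$, $(Y,\mu)$ and an injective map $\Phi:X\to Y$, the distortion of $\Phi$ is $\|\Phi\|\cdot\|\Phi^{-1}\|$, where $\|\Phi\|=\max_{x\neq y}\mu(\Phi(x),\Phi(y))/\nu(x,y)$ and $\|\Phi^{-1}\|=\max_{x\neq y}\nu(x,y)/\mu(\Phi(x),\Phi(y))$. *)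

From HB Require Import structures.
From mathcomp Require Import all_boot all_order all_algebra.
Set Implicit Arguments. Unset Strict Implicit. Unset Printing Implicit Defensive.
Import Order.TTheory GRing.Theory Num.Theory.

Record sgraph := SGraph {
  vertex :> finType;
  adj : rel vertex;
  adj_sym : symmetric adj;
  adj_irr : irreflexive adj }.

Section Graphs.
Variable G : sgraph.

Definition gconnected : Prop := forall x y : G, connect (@adj G) x y.

Definition walk_len (x y : G) (n : nat) : bool :=
  [exists p : n.-tuple (vertex G), path (@adj G) x p && (last x p == y)].

Lemma dist_ex (x y : G) :
  exists n, walk_len x y n || ~~ connect (@adj G) x y.
Proof.
case: (boolP (connect (@adj G) x y)) => [/connectP [p pth ->]|_];
  last by exists 0; rewrite orbT.
exists (size p); apply/orP; left; apply/existsP; exists (in_tuple p : (size p).-tuple (vertex G)).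
by rewrite /= pth eqxx.
Qed.

(* shortest-path distance (length of a shortest walk); 0 if disconnected,
   which never happens for the connected graphs used below *)
Definition gdist (x y : G) : nat := ex_minn (dist_ex x y).

Definition induced (S : {set G}) : rel G :=
  fun a b => [&& @adj G a b, a \in S & b \in S].
End Graphs.

Definition minor_of (H G : sgraph) : Prop :=
  exists phi : H -> {set G},
    [/\ forall u, phi u != set0,
        forall u v, u != v -> [disjoint phi u & phi v],
        forall u x y, x \in phi u -> y \in phi u -> connect (induced (phi u)) x y
      & forall u v, @adj H u v ->
          exists x y, [/\ x \in phi u, y \in phi v & @adj G x y]].

Section Subdivision.
Variables (H : sgraph) (k : nat).

Definition sedge := {p : H * H | @adj H p.1 p.2 && (enum_rank p.1 < enum_rank p.2)%N}.

(* vertices: original vertices, plus k-1 interior vertices (e, i), i < k-1,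
   on the edge e; (e, i) sits at distance i+1 from (val e).1 along the path *)
Definition svert : finType := (H + (sedge * 'I_k.-1))%type.

Definition sub_r (x y : svert) : bool :=
  match x, y with
  | inl u, inl v => (k == 1)%N && @adj H u v
  | inl u, inr (e, i) =>
      ((u == (val e).1) && (i == 0%N :> nat)) ||
      ((u == (val e).2) && (i == (k - 2)%N :> nat))
  | inr (e, i), inr (e', j) => (e == e') && (i.+1 == j :> nat)
  | _, _ => false
  end.

Definition sub_adj : rel svert := fun x y => (x != y) && (sub_r x y || sub_r y x).

Lemma sub_adj_sym : symmetric sub_adj.
Proof. by move=> x y; rewrite /sub_adj eq_sym orbC. Qed.

Lemma sub_adj_irr : irreflexive sub_adj.
Proof. by move=> x; rewrite /sub_adj eqxx. Qed.

Definition subdivision : sgraph := SGraph sub_adj_sym sub_adj_irr.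
End Subdivision.

Local Open Scope ring_scope.

Definition expansion (R : realFieldType) (X Y : sgraph) (f : X -> Y) : R :=
  \big[Num.max/0]_(p : X * X | p.1 != p.2)
     ((gdist (f p.1) (f p.2))%:R / (gdist p.1 p.2)%:R).

Definition contraction (R : realFieldType) (X Y : sgraph) (f : X -> Y) : R :=
  \big[Num.max/0]_(p : X * X | p.1 != p.2)
     ((gdist p.1 p.2)%:R / (gdist (f p.1) (f p.2))%:R).

Definition distortion (R : realFieldType) (X Y : sgraph) (f : X -> Y) : R :=
  expansion R f * contraction R f.

From mathcomp Require Import all_boot all_order all_algebra.
From mathcomp Require Import lra zify.
Import Order.TTheory GRing.Theory Num.Theory.
Set Implicit Arguments. Unset Strict Implicit. Unset Printing Implicit Defensive.

(* Write [al] and [be] for the expansion and contraction of [f], and suppose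
   [al * be < k/6 - 1/2]; we build an [H]-minor of [G].  Put [m = k %/ 3].  If
   two vertices [y, y'] of [J] have images within [al] of a common vertex of
   [G], then [dist_J(y, y') <= be * dist_G(f y, f y') <= 2 al be], which is less
   than [min (k - 2m) (m + 1)].  Joining the images of consecutive vertices of
   [J] by geodesics (each of length at most [al]) turns every subdivided edge
   into a walk of [G].  The branch set of [u] is [f u], the walks along the
   first and last [m] steps of the edges at [u], and, for each edge [uv], the
   walk from [f u] up to its first entry into the part belonging to [v].  Its
   vertices are within [al] of images of points of [J] that are close to [u],
   or lie on [uv] and are far from [v]; the distance estimate above separates
   different branch sets, and the walks make them connected and adjacent. *)

Lemma path_first_entry (T : eqType) (r : rel T) (a : pred T) x s :
  path r x s -> ~~ a x -> has a s ->
  exists y z, [/\ y \in take (find a (x :: s)) (x :: s), a z & r y z].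
Proof.
elim: s x => [|y s IH] x //= /andP[rxy ps] ax.
rewrite (negbTE ax); case ay: (a y) => /= has_s.
  by exists x, y; rewrite /= ay inE eqxx.
have [z [w [zi aw rzw]]] := IH y ps (negbT ay) has_s.
by exists z, w; split => //; rewrite inE; apply/orP; right; rewrite /= ay in zi.
Qed.

Lemma mem_take_find (T : eqType) (a : pred T) s x :
  x \in take (find a s) s -> ~~ a x.
Proof.
elim: s => [|y s IH] //=; case ay: (a y) => //=.
by rewrite inE => /orP[/eqP ->|/IH]; rewrite ?ay.
Qed.

Section Distance.
Variable G : sgraph.
Implicit Types (x y z : G) (s : seq G).

Lemma gdist_path x s : path (@adj G) x s -> gdist x (last x s) <= size s.
Proof.
move=> ps; rewrite /gdist; case: ex_minnP => m _; apply; apply/orP; left.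
by apply/existsP; exists (in_tuple s); rewrite /= ps eqxx.
Qed.

Lemma gdist_path_mem x s y :
  path (@adj G) x s -> y \in x :: s -> gdist x y <= size s.
Proof.
move=> ps ys; case/splitPl: ys ps => s1 s2 <-.
rewrite cat_path size_cat => /andP[ps1 _].
exact: leq_trans (gdist_path ps1) (leq_addr _ _).
Qed.

Lemma gdist0 x : gdist x x = 0.
Proof. by apply/eqP; rewrite -leqn0 (gdist_path (s := [::])). Qed.

Lemma gdist_geodesic x y : connect (@adj G) x y ->
  exists s, [&& path (@adj G) x s, last x s == y & size s == gdist x y].
Proof.
move=> cxy; rewrite /gdist; case: ex_minnP => m + _; rewrite cxy orbF.
by case/existsP=> s /andP[ps ls]; exists s; rewrite ps ls size_tuple /=.
Qed.

Lemma gdist_sym x y : connect (@adj G) x y -> gdist x y = gdist y x.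
Proof.
have le_sym u v : connect (@adj G) u v -> gdist v u <= gdist u v.
  case/gdist_geodesic=> s /and3P[ps /eqP <- /eqP <-].
  have rps : path (@adj G) (last u s) (rev (belast u s)).
    by rewrite rev_path (eq_path (e' := @adj G)) // => a b; exact: adj_sym.
  have lrps : last (last u s) (rev (belast u s)) = u.
    by case: s {ps rps} => //= a t; rewrite rev_cons last_rcons.
  by have := gdist_path rps; rewrite lrps size_rev size_belast.
move=> cxy; have cyx : connect (@adj G) y x by rewrite (sym_connect_sym (@adj_sym G)).
by apply/eqP; rewrite eqn_leq !le_sym.
Qed.

Lemma gdist_triangle x y z : connect (@adj G) x y -> connect (@adj G) y z ->
  gdist x z <= gdist x y + gdist y z.
Proof.
case/gdist_geodesic=> s /and3P[ps /eqP ls /eqP <-].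
case/gdist_geodesic=> t /and3P[pt /eqP lt /eqP <-].
have := @gdist_path x (s ++ t); rewrite last_cat ls lt size_cat; apply.
by rewrite cat_path ps ls.
Qed.

Lemma gdist_eq0 x y : connect (@adj G) x y -> gdist x y = 0 -> x = y.
Proof. by case/gdist_geodesic=> -[|? ?] /and3P[_ /eqP <- /eqP <-]. Qed.

Lemma gdist_adj x y : @adj G x y -> gdist x y = 1.
Proof.
move=> axy; apply/eqP; rewrite eqn_leq (gdist_path (s := [:: y])) /= ?axy //.
rewrite lt0n; apply/eqP => /(gdist_eq0 (connect1 axy)) eq_xy.
by move: axy; rewrite eq_xy adj_irr.
Qed.

Lemma induced_sym (S : {set G}) : symmetric (induced S).
Proof. by move=> a b; rewrite /induced adj_sym (andbC (a \in S)). Qed.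

Lemma path_connect_induced (S : {set G}) x s a b :
  path (@adj G) x s -> {subset x :: s <= S} -> a \in x :: s -> b \in x :: s ->
  connect (induced S) a b.
Proof.
move=> ps sS.
have pS : path (induced S) x s.
  elim: s x ps sS => //= y s IH x /andP[axy ps] sS.
  rewrite /induced axy !sS ?inE ?eqxx ?orbT //= IH // => z zs.
  by apply: sS; rewrite inE zs orbT.
move=> ai bi; apply: connect_trans (path_connect pS bi).
by rewrite (sym_connect_sym (@induced_sym S)); exact: (path_connect pS ai).
Qed.

End Distance.

Section Subdivision.
Variables (H : sgraph) (k : nat).
Local Notation J := (subdivision H k).

Lemma sedge_neq (e : sedge H) : (val e).1 != (val e).2.
Proof.
by case/andP: (valP e) => a _; apply: contraTneq a => ->; rewrite adj_irr.
Qed.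

Lemma sedge_rev_neq (e e' : sedge H) : (val e).1 = (val e').2 -> (val e).2 != (val e').1.
Proof.
case/andP: (valP e) => _ lt_e; case/andP: (valP e') => _ lt_e'.
move=> e1; apply/eqP => e2; rewrite e1 e2 in lt_e.
by have := ltn_trans lt_e lt_e'; rewrite ltnn.
Qed.

Lemma sedge_of_adj (u v : H) : adj u v ->
  exists e : sedge H, val e = (u, v) \/ val e = (v, u).
Proof.
move=> a; case: (ltngtP (enum_rank u) (enum_rank v)) => h.
- by exists (exist _ (u, v) (introT andP (conj a h))); left.
- have a' : adj v u by rewrite adj_sym.
  by exists (exist _ (v, u) (introT andP (conj a' h))); right.
- by move: a; rewrite (enum_rank_inj (val_inj h)) adj_irr.
Qed.

(* [edge_pt e p] is the vertex at distance [p] from [(val e).1] on the path of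
   [J] subdividing [e]. *)
Definition edge_pt (e : sedge H) (p : nat) : J :=
  if p is p'.+1 then
    if (insub p' : option 'I_k.-1) is Some i then inr (e, i) else inl (val e).2
  else inl (val e).1.

Lemma edge_pt0 e : edge_pt e 0 = inl (val e).1.
Proof. by []. Qed.

Lemma edge_pt_inr e (i : 'I_k.-1) : edge_pt e i.+1 = inr (e, i).
Proof. by rewrite /= insubT //= => lt_i; congr (inr (_, _)); apply: val_inj. Qed.

Lemma edge_pt_cases p : p <= k ->
  [\/ p = 0, p = k | exists i : 'I_k.-1, p = i.+1].
Proof.
case: p => [|p] pk; first by constructor 1.
case: (ltnP p.+1 k) => [lt_pk|]; last by constructor 2; apply/eqP; rewrite eqn_leq pk.
have lt_p : p < k.-1 by rewrite ltn_predRL.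
by constructor 3; exists (Ordinal lt_p).
Qed.

(* [trunc_dist a x] is [min k (gdist (inl a) x)]. *)
Definition trunc_dist (a : H) (x : J) : nat :=
  match x with
  | inl w => if w == a then 0 else k
  | inr (e, i) => if (val e).1 == a then i.+1
                  else if (val e).2 == a then k.-1 - i else k
  end.

Lemma trunc_dist_edge_ptN a e p : a != (val e).1 -> a != (val e).2 ->
  trunc_dist a (edge_pt e p) = k.
Proof.
rewrite ![a == _]eq_sym => /negbTE n1 /negbTE n2.
case: p => [|p] /=; first by rewrite n1.
by case: (insub p) => [i|] /=; rewrite ?n1 n2.
Qed.

Lemma trunc_dist_sum a b (x : J) : a != b -> k <= trunc_dist a x + trunc_dist b x.
Proof.
move=> ab; case: x => [w|[e i]] /=.
  by case: (w =P a) => [wa|_]; case: (w =P b) => [wb|_]; rewrite ?addn0 ?leq_addr //;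
     move: ab; rewrite -wa -wb eqxx.
have ne := sedge_neq e; have := ltn_ord i.
case: ((val e).1 =P a) => [ea|_]; case: ((val e).1 =P b) => [eb|_];
case: ((val e).2 =P a) => [ea'|_]; case: ((val e).2 =P b) => [eb'|_]; try lia.
all: by move: ab ne; rewrite -?ea -?eb -?ea' -?eb' eqxx.
Qed.

Lemma trunc_dist_sub_r a (x y : J) : sub_r x y ->
  (trunc_dist a y <= (trunc_dist a x).+1) && (trunc_dist a x <= (trunc_dist a y).+1).
Proof.
case: x y => [u|[e i]] [v|[e' j]] //=.
- by case/andP=> /eqP k1 _; rewrite k1; case: (u == a); case: (v == a).
- move=> h; have ne := sedge_neq e'; have := ltn_ord j.
  case/orP: h => /andP[/eqP -> /eqP ->]; case: ((val e').1 =P a) => [ea|_];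
    case: ((val e').2 =P a) => [eb|_]; rewrite ?eqxx /=; try lia;
    by move: ne; rewrite ea eb eqxx.
- case/andP=> /eqP <- /eqP ij; have := ltn_ord j.
  by case: ((val e).1 == a); case: ((val e).2 == a) => /=; lia.
Qed.

Lemma trunc_dist_adj a (x y : J) : sub_adj x y -> trunc_dist a y <= (trunc_dist a x).+1.
Proof. by case/andP=> _ /orP[] /(trunc_dist_sub_r a) /andP[]. Qed.

Lemma trunc_dist_path a (x : J) s : path (@sub_adj H k) x s ->
  trunc_dist a (last x s) <= trunc_dist a x + size s.
Proof.
elim: s x => [|y s IH] x /=; first by rewrite addn0.
case/andP=> /(trunc_dist_adj a) axy /IH; rewrite addnS => /leq_trans; apply.
by rewrite -addSn leq_add2r.
Qed.

Hypothesis k_gt0 : 0 < k.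

Lemma edge_ptk e : edge_pt e k = inl (val e).2.
Proof.
rewrite [X in edge_pt e X](esym (prednK k_gt0)) /=.
by case: insubP => // i; rewrite ltnn.
Qed.

Lemma edge_pt_adj e p : p < k -> sub_adj (edge_pt e p) (edge_pt e p.+1).
Proof.
move=> pk; have ne := sedge_neq e; have [a _] := andP (valP e).
case: (edge_pt_cases (ltnW pk)) => [p0|pkk|[i pi]]; subst p.
- case: (edge_pt_cases pk) => [//|k1|[j j1]].
    have -> : edge_pt e 1 = inl (val e).2 by rewrite [X in edge_pt e X]k1 (edge_ptk e).
    rewrite /sub_adj /= -k1 eqxx a /= andbT.
    by apply: contra ne => /eqP[->].
  have j0 : j = 0 :> nat by case: j1.
  by rewrite j1 edge_pt_inr /sub_adj /= eqxx j0.
- by rewrite ltnn in pk.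
- case: (edge_pt_cases pk) => [//|k2|[j j2]].
    rewrite edge_pt_inr [X in edge_pt e X]k2 edge_ptk /sub_adj /= eqxx.
    by apply/orP; right; apply/eqP; lia.
  rewrite j2 !edge_pt_inr /sub_adj /= eqxx /=.
  have ij : i.+1 = j :> nat by case: j2.
  rewrite ij eqxx andbT; apply/eqP => -[eij].
  by move: ij; rewrite eij; lia.
Qed.

Lemma connect_edge_pt e p : p <= k -> connect (@sub_adj H k) (edge_pt e 0) (edge_pt e p).
Proof.
elim: p => [|p IH] pk; first exact: connect0.
exact: connect_trans (IH (ltnW pk)) (connect1 (edge_pt_adj e pk)).
Qed.

Lemma subdivision_connected : gconnected H -> gconnected J.
Proof.
move=> hH; have symJ := sym_connect_sym (@sub_adj_sym H k).
have c_adj u v : adj u v -> connect (@sub_adj H k) (inl u) (inl v).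
  case/sedge_of_adj=> e [] ee; have := connect_edge_pt e (leqnn k);
  by rewrite edge_pt0 edge_ptk ee // symJ.
have c_branch u v : connect (@sub_adj H k) (inl u) (inl v).
  case/connectP: (hH u v) => s; elim: s u => [|w s IH] u /=; first by move=> _ ->.
  by case/andP=> auw ps lv; exact: connect_trans (c_adj _ _ auw) (IH _ ps lv).
have c_root (x : J) : exists u, connect (@sub_adj H k) (inl u) x.
  case: x => [u|[e i]]; first by exists u.
  exists (val e).1; rewrite -edge_pt_inr -edge_pt0.
  by apply: connect_edge_pt; have := ltn_ord i; lia.
move=> x y; have [u ux] := c_root x; have [v vy] := c_root y.
by rewrite symJ in ux; exact: connect_trans (connect_trans ux (c_branch u v)) vy.
Qed.

Lemma trunc_dist_edge_pt1 e p : p <= k -> trunc_dist (val e).1 (edge_pt e p) = p.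
Proof.
have ne := sedge_neq e.
case/edge_pt_cases=> [->|->|[i ->]]; rewrite ?edge_pt0 ?edge_ptk ?edge_pt_inr /=.
- by rewrite eqxx.
- by rewrite eq_sym (negbTE ne).
- by rewrite eqxx.
Qed.

Lemma trunc_dist_edge_pt2 e p : p <= k -> trunc_dist (val e).2 (edge_pt e p) = k - p.
Proof.
have ne := sedge_neq e.
case/edge_pt_cases=> [->|->|[i ->]]; rewrite ?edge_pt0 ?edge_ptk ?edge_pt_inr /=.
- by rewrite (negbTE ne) subn0.
- by rewrite eqxx subnn.
- by rewrite (negbTE ne) eqxx; have := ltn_ord i; lia.
Qed.

Lemma trunc_dist_lipschitz a (x y : J) : gconnected H ->
  trunc_dist a y - trunc_dist a x <= gdist x y.
Proof.
move=> hH; have [s /and3P[ps /eqP <- /eqP <-]] := gdist_geodesic (subdivision_connected hH x y).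
by rewrite leq_subLR; exact: trunc_dist_path.
Qed.
End Subdivision.

Local Open Scope ring_scope.

Section Minor.
Variables (R : realFieldType) (G H : sgraph) (k : nat).
Hypotheses (hG : gconnected G) (hH : gconnected H) (k_gt0 : (0 < k)%N).
Variable f : subdivision H k -> G.
Hypothesis finj : injective f.
Local Notation J := (subdivision H k).
Local Notation al := (expansion R f).
Local Notation be := (contraction R f).

Lemma expansion_ge0 : 0 <= al.
Proof. exact: bigmax_ge_id. Qed.

Lemma contraction_ge0 : 0 <= be.
Proof. exact: bigmax_ge_id. Qed.

Lemma gdist_image_adj_le (x y : J) : sub_adj x y -> (gdist (f x) (f y))%:R <= al.
Proof.
move=> axy; have xy : x != y by case/andP: axy.
rewrite /expansion (bigmaxD1 (x, y)) //= le_max (@gdist_adj J x y axy) divr1 lexx //.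
Qed.

Lemma gdist_le_contraction (x y : J) : x != y ->
  (gdist x y)%:R <= be * (gdist (f x) (f y))%:R.
Proof.
move=> xy; have d_gt0 : (0 < gdist (f x) (f y))%N.
  by rewrite lt0n; apply: contra xy => /eqP /(gdist_eq0 (hG _ _)) /finj ->.
rewrite -ler_pdivrMr ?ltr0n // /contraction (bigmaxD1 (x, y)) //= le_max lexx //.
Qed.

(* Two points of [J] whose images are both within [al] of a common vertex are
   at distance at most [2 al] in [G], hence at most [2 al be] in [J]. *)
Lemma trunc_dist_close_images a (y y' : J) (g : G) :
  (gdist (f y) g)%:R <= al -> (gdist (f y') g)%:R <= al ->
  (trunc_dist a y' - trunc_dist a y)%:R <= 2 * (al * be).
Proof.
move=> yg y'g; have al0 := expansion_ge0; have be0 := contraction_ge0.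
case: (eqVneq y y') => [<-|yy']; first by rewrite subnn mulr_ge0 ?mulr_ge0.
have dG : (gdist (f y) (f y') <= gdist (f y) g + gdist (f y') g)%N.
  by rewrite [X in (_ + X)%N]gdist_sym ?gdist_triangle.
apply: (@le_trans _ _ (gdist y y')%:R); first by rewrite ler_nat trunc_dist_lipschitz.
apply: le_trans (gdist_le_contraction yy') _.
move: dG; rewrite -(ler_nat R) natrD => dG; nra.
Qed.

Variable m : nat.
Hypotheses (m_gt0 : (0 < m)%N) (m_lt_k : (m < k)%N).
Hypothesis small_distortion : 2 * (al * be) < (minn (k - 2 * m) m.+1)%:R.

Lemma trunc_dist_gap a (y y' : J) (g : G) :
  (gdist (f y) g)%:R <= al -> (gdist (f y') g)%:R <= al ->
  (trunc_dist a y' - trunc_dist a y < minn (k - 2 * m) m.+1)%N.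
Proof.
move=> yg y'g; rewrite -(ltr_nat R).
exact: le_lt_trans (trunc_dist_close_images a yg y'g) small_distortion.
Qed.

Definition geodesic (x y : G) : seq G := xchoose (gdist_geodesic (hG x y)).

Lemma geodesicP x y : [&& path (@adj G) x (geodesic x y), last x (geodesic x y) == y
  & size (geodesic x y) == gdist x y].
Proof. exact: (xchooseP (gdist_geodesic (hG x y))). Qed.

Local Notation fpt e p := (f (edge_pt k e p)).

Fixpoint edge_walk (e : sedge H) (lo n : nat) : seq G :=
  if n is n'.+1 then edge_walk e lo n' ++ geodesic (fpt e (lo + n')) (fpt e (lo + n').+1)
  else [::].

Lemma edge_walk_path e lo n : path (@adj G) (fpt e lo) (edge_walk e lo n) &&
  (last (fpt e lo) (edge_walk e lo n) == fpt e (lo + n)).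
Proof.
elim: n => [|n IH] /=; first by rewrite addn0 eqxx.
case/andP: IH => pw /eqP lw; case/and3P: (geodesicP (fpt e (lo + n)) (fpt e (lo + n).+1)).
by rewrite cat_path last_cat lw pw addnS => -> ->.
Qed.

Lemma edge_walk_last_mem e lo n : fpt e (lo + n) \in fpt e lo :: edge_walk e lo n.
Proof. by case/andP: (edge_walk_path e lo n) => _ /eqP <-; exact: mem_last. Qed.

Lemma edge_walkD e lo n1 n2 :
  edge_walk e lo (n1 + n2) = edge_walk e lo n1 ++ edge_walk e (lo + n1) n2.
Proof. by elim: n2 => [|n IH] /=; rewrite ?addn0 ?cats0 // addnS /= IH -catA addnA. Qed.

Lemma edge_walk_near e lo n g : (0 < n)%N -> (lo + n <= k)%N ->
  g \in fpt e lo :: edge_walk e lo n ->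
  exists2 j, (j < n)%N & (gdist (fpt e (lo + j)) g)%:R <= al.
Proof.
elim: n => [|n IH] // _ hn; rewrite /= -cat_cons mem_cat => /orP[gi|gi].
  case: n IH hn gi => [|n] IH hn gi.
    by exists 0%N; rewrite // addn0; move: gi; rewrite inE => /eqP ->; rewrite gdist0 expansion_ge0.
  have hn1 : (lo + n.+1 <= k)%N by lia.
  by have [j jn dj] := IH isT hn1 gi; exists j => //; exact: ltnW.
have lt_n : (lo + n < k)%N by rewrite -addnS.
exists n => //; apply: le_trans _ (gdist_image_adj_le (edge_pt_adj k_gt0 e lt_n)).
case/and3P: (geodesicP (fpt e (lo + n)) (fpt e (lo + n).+1)) => pg _ /eqP <-.
by rewrite ler_nat (gdist_path_mem pg) // inE gi orbT.
Qed.

Definition core (u : H) : {set G} :=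
  f (inl u) |: ((\bigcup_(e | (val e).1 == u) [set g in fpt e 0 :: edge_walk e 0 m])
     :|: \bigcup_(e | (val e).2 == u) [set g in fpt e (k - m) :: edge_walk e (k - m) m]).

Definition edge_image (e : sedge H) : seq G := fpt e 0 :: edge_walk e 0 k.

Definition in_core2 (e : sedge H) : pred G := fun g => g \in core (val e).2.

Definition approach (e : sedge H) : {set G} :=
  [set g in take (find (in_core2 e) (edge_image e)) (edge_image e)].

Definition branch (u : H) : {set G} :=
  core u :|: \bigcup_(e | (val e).1 == u) approach e.

Lemma root_in_core u : f (inl u) \in core u.
Proof. exact: setU11. Qed.

Lemma core_near u g : g \in core u ->
  exists2 y : J, (trunc_dist u y <= m)%N & (gdist (f y) g)%:R <= al.
Proof.
case/setU1P => [->|/setUP[] /bigcupP[e /eqP eu]].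
- by exists (inl u); rewrite /= ?eqxx // gdist0 expansion_ge0.
- rewrite inE => gi; have [|j jm dj] := edge_walk_near m_gt0 _ gi; first exact: ltnW.
  exists (edge_pt k e j); last exact: dj.
  have jk : (j <= k)%N by lia.
  by rewrite -eu trunc_dist_edge_pt1 // ltnW.
- rewrite inE => gi; have [|j jm dj] := edge_walk_near m_gt0 _ gi; first exact/eq_leq/subnK/ltnW.
  exists (edge_pt k e (k - m + j)); last exact: dj.
  have jk : (k - m + j <= k)%N by lia.
  by rewrite -eu trunc_dist_edge_pt2 //; lia.
Qed.

Lemma approach_near e g : g \in approach e ->
  g \notin core (val e).2 /\
  exists2 p, (p < k - m)%N & (gdist (fpt e p) g)%:R <= al.
Proof.
rewrite inE => gi; have gC := mem_take_find gi; split => //.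
have split_image : edge_image e = (fpt e 0 :: edge_walk e 0 (k - m)) ++ edge_walk e (k - m) m.
  by rewrite /edge_image cat_cons -edge_walkD subnK // ltnW.
move: (mem_take gi); rewrite split_image mem_cat => /orP[gi'|gi'].
  have [||j jm dj] := edge_walk_near _ _ gi'; rewrite ?subn_gt0 ?add0n ?leq_subr //.
  by exists j.
case/negP: gC; apply/setU1P; right; apply/setUP; right.
by apply/bigcupP; exists e => //; rewrite inE inE gi' orbT.
Qed.

Lemma core_disjoint u w g : u != w -> g \in core u -> g \in core w -> False.
Proof.
move=> uw /core_near[y yu dy] /core_near[y' y'w dy'].
have := trunc_dist_gap u dy dy'; have := trunc_dist_sum y' uw; have := geq_minl (k - 2 * m) m.+1.
lia.
Qed.

Lemma core_approach_disjoint u e g : u != (val e).1 ->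
  g \in core u -> g \in approach e -> False.
Proof.
move=> ue gu /approach_near[gC [p pk dp]].
have ue2 : u != (val e).2 by apply: contraNneq gC => <-.
have [y yu dy] := core_near gu.
have := trunc_dist_gap u dy dp; rewrite trunc_dist_edge_ptN //.
have := geq_minl (k - 2 * m) m.+1; lia.
Qed.

Lemma approach_disjoint e e' g : (val e).1 != (val e').1 ->
  g \in approach e -> g \in approach e' -> False.
Proof.
have separated a (y y' : sedge H) p p' : a = (val y').1 -> a != (val y).1 -> a != (val y).2 ->
    (p < k - m)%N -> (p' < k - m)%N ->
    (gdist (fpt y p) g)%:R <= al -> (gdist (fpt y' p') g)%:R <= al -> False.
  move=> -> n1 n2 pk p'k dp dp'.
  have := trunc_dist_gap (val y').1 dp' dp.
  rewrite trunc_dist_edge_ptN // trunc_dist_edge_pt1 ?(leq_trans (ltnW p'k)) ?leq_subr //.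
  have := geq_minr (k - 2 * m) m.+1; lia.
move=> ee' /approach_near[_ [p pk dp]] /approach_near[_ [p' p'k dp']].
case: (eqVneq (val e').1 (val e).2) => [e'e|ne'e].
  have ne2 : (val e).1 != (val e').2.
    by apply/eqP => /sedge_rev_neq; rewrite e'e eqxx.
  by apply: (separated (val e).1 e' e p' p) => //; rewrite eq_sym.
by apply: (separated (val e').1 e e' p p') => //; rewrite eq_sym.
Qed.

Lemma branch_disjoint u w : u != w -> [disjoint branch u & branch w].
Proof.
move=> uw; rewrite -setI_eq0; apply/set0Pn => -[g /setIP[]].
case/setUP=> [gu|/bigcupP[e /eqP eu ge]]; case/setUP=> [gw|/bigcupP[e' /eqP ew ge']].
- exact: core_disjoint uw gu gw.
- by apply: (core_approach_disjoint _ gu ge'); rewrite ew.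
- by apply: (core_approach_disjoint _ gw ge); rewrite eu eq_sym.
- by apply: (approach_disjoint _ ge ge'); rewrite eu ew.
Qed.

Lemma core_sub_branch u : {subset core u <= branch u}.
Proof. by move=> g gu; rewrite inE gu. Qed.

Lemma approach_sub_branch e : {subset approach e <= branch (val e).1}.
Proof. by move=> g ge; apply/setUP; right; apply/bigcupP; exists e. Qed.

Lemma connect_branch_root u g : g \in branch u ->
  connect (induced (branch u)) (f (inl u)) g.
Proof.
case/setUP=> [|/bigcupP[e /eqP <- ge]].
  case/setU1P=> [->|/setUP[] /bigcupP[e /eqP <-]]; first exact: connect0.
  - rewrite inE => gi; case/andP: (edge_walk_path e 0 m) => pw _.
    apply: (path_connect_induced pw _ (mem_head _ _) gi).
    by move=> x xi; apply: core_sub_branch; apply/setU1P; right; apply/setUP; left;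
      apply/bigcupP; exists e; rewrite ?inE.
  - rewrite inE => gi; case/andP: (edge_walk_path e (k - m) m) => pw _.
    have root_last : f (inl (val e).2) \in fpt e (k - m) :: edge_walk e (k - m) m.
      rewrite -(edge_ptk k_gt0) [X in edge_pt k e X](esym (subnK (ltnW m_lt_k))).
      exact: edge_walk_last_mem.
    apply: (path_connect_induced pw _ root_last gi).
    by move=> x xi; apply: core_sub_branch; apply/setU1P; right; apply/setUP; right;
      apply/bigcupP; exists e; rewrite ?inE.
move: ge; rewrite inE /edge_image; case E: (find _ _) => [|n] //=.
case/andP: (edge_walk_path e 0 k) => /(take_path n) pw _ gi.
apply: (path_connect_induced pw _ (mem_head _ _) gi).
by move=> x xi; apply: approach_sub_branch; rewrite inE /edge_image E.
Qed.

Lemma connect_branch u : {in branch u &, forall x y, connect (induced (branch u)) x y}.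
Proof.
move=> x y xu yu; apply: connect_trans (connect_branch_root yu).
by rewrite (sym_connect_sym (@induced_sym _ _)); exact: connect_branch_root.
Qed.

(* The image of [e] starts in [core (val e).1], which misses [core (val e).2],
   and ends in [core (val e).2]: the edge where it first enters the latter
   joins [approach e] to [core (val e).2]. *)
Lemma branch_sedge (e : sedge H) : exists x y,
  [/\ x \in branch (val e).1, y \in branch (val e).2 & adj x y].
Proof.
have ne := sedge_neq e.
case/andP: (edge_walk_path e 0 k) => pw _.
have start_out : ~~ in_core2 e (fpt e 0).
  by apply/negP => /(core_disjoint ne); apply; exact: root_in_core.
have end_in : has (in_core2 e) (edge_walk e 0 k).
  have := edge_walk_last_mem e 0 k; rewrite add0n (edge_ptk k_gt0) inE.
  case/orP=> [/eqP|hk]; last by apply/hasP; exists (f (inl (val e).2)) => //; exact: root_in_core.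
  by move/(congr1 (in_core2 e)); rewrite (negbTE start_out) /in_core2 root_in_core.
have [x [y [xi yC xy]]] := path_first_entry pw start_out end_in.
exists x, y; split => //; last exact: core_sub_branch.
by apply: approach_sub_branch; rewrite inE.
Qed.

Lemma branch_adj u v : adj u v ->
  exists x y, [/\ x \in branch u, y \in branch v & adj x y].
Proof.
case/sedge_of_adj=> e [] ee; have [x [y [xu yv xy]]] := branch_sedge e; rewrite ee in xu yv.
  by exists x, y.
by exists y, x; rewrite adj_sym.
Qed.

Lemma minor_of_small_distortion : minor_of H G.
Proof.
exists branch; split.
- by move=> u; apply/set0Pn; exists (f (inl u)); exact/core_sub_branch/root_in_core.
- exact: branch_disjoint.
- exact: connect_branch.
- exact: branch_adj.
Qed.

End Minor.

Theorem lemma1 (R : realFieldType) (G H : sgraph) (k : nat)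
  (hG : gconnected G) (hH : gconnected H)
  (hminor : ~ minor_of H G) (hk : (1 <= k)%N)
  (f : subdivision H k -> G) (finj : injective f) :
  distortion R f >= k%:R / 6 - 1 / 2.
Proof.
rewrite leNgt; apply/negP => small; rewrite /distortion in small.
have al0 := expansion_ge0 R f; have be0 := contraction_ge0 R f.
have k_gt3 : (3 < k)%N by rewrite -(ltr_nat R); nra.
have m_gt0 : (0 < k %/ 3)%N by lia.
have m_lt_k : (k %/ 3 < k)%N by lia.
apply/hminor/(minor_of_small_distortion hG hH hk finj m_gt0 m_lt_k).
have : (k <= 3 * minn (k - 2 * (k %/ 3)) (k %/ 3).+1 + 3)%N by lia.
rewrite -(ler_nat R) natrD natrM => /= k_le; lra.
Qed.
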